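(* Consider the single-armed lazy restless bandit described in the context. If $\rho_0<\rho_1$, $R_0<R_1$ and $\beta\in(0,1/3)$, then the bandit is indexable: for $\eta\in\mathbb{R}$ let $\mathcal{P}_\beta(\eta)=\{\pi\in[0,1]: V_S(\pi,\eta)\le V_{NS}(\pi,\eta)\}$; then $\mathcal{P}_\beta(\eta)$ increases monotonically from $\emptyset$ to $[0,1]$ as $\eta$ increases from $-\infty$ to $\infty$, i.e. $\mathcal{P}_\beta(\eta_1)\setminus\mathcal{P}_\beta(\eta_2)=\emptyset$ whenever $\eta_1\le\eta_2$.
   Context: Single-armed lazy restless bandit: an arm has a hidden state in $\{0,1\}$ evolving as a two-state Markov chain with transition probabilities $p_{i,j}$ ($i,j\in\{0,1\}$, $p_{i,0}+p_{i,1}=1$). Time is divided into sessions; during each session the chain makes exactly $K\ge1$ transitions ($K$ a fixed known integer). In each session the decision maker either plays the arm or does not. If played and the arm is in state $i$ at the start of the session, an ACK is received at the end with probability $\rho_i\in[0,1]$ and the expected reward is $R_i\in\mathbb{R}$; if not played, a subsidy $\eta\in\mathbb{R}$ is received and nothing is observed. Discount factor $\beta\in(0,1)$. The belief $\pi\in[0,1]$ is the probability that the arm is in state $0$. Define $R_S(\pi)=\pi R_0+(1-\pi)R_1$, $\rho(\pi)=\pi\rho_0+(1-\pi)\rho_1$, $\gamma_1(\pi)=\frac{(1-\pi)\rho_1p_{1,0}+\pi\rho_0p_{0,0}}{\rho_1(1-\pi)+\rho_0\pi}$, $\gamma_0(\pi)=\frac{(1-\pi)(1-\rho_1)p_{1,0}+\pi(1-\rho_0)p_{0,0}}{(1-\rho_1)(1-\pi)+(1-\rho_0)\pi}$,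 $\gamma_2(\pi)=(p_{0,0}-p_{1,0})^K\pi+p_{1,0}\sum_{j=0}^{K-1}(p_{0,0}-p_{1,0})^j$. For each $\eta$, the value functions $V_S(\cdot,\eta),V_{NS}(\cdot,\eta),V(\cdot,\eta)$ on $[0,1]$ are the unique bounded solution of $V_S(\pi,\eta)=R_S(\pi)+\beta\big(\rho(\pi)V(\gamma_1(\pi),\eta)+(1-\rho(\pi))V(\gamma_0(\pi),\eta)\big)$, $V_{NS}(\pi,\eta)=\eta+\beta V(\gamma_2(\pi),\eta)$, $V(\pi,\eta)=\max\{V_S(\pi,\eta),V_{NS}(\pi,\eta)\}$ (a term with zero coefficient is taken to be $0$). *)

From Stdlib Require Import Reals.
Open Scope R_scope.

(* Model parameters.  p00 = p_{0,0}, p10 = p_{1,0}; p_{0,1} = 1 - p00,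
   p_{1,1} = 1 - p10 are determined by the row-sum constraints. *)

Fixpoint geom (d : R) (K : nat) : R :=
  match K with
  | O => 0
  | S k => geom d k + d ^ k
  end.

Definition RS (R0 R1 pi : R) : R := pi * R0 + (1 - pi) * R1.
Definition rho (rho0 rho1 pi : R) : R := pi * rho0 + (1 - pi) * rho1.

Definition gamma1 (p00 p10 rho0 rho1 pi : R) : R :=
  ((1 - pi) * rho1 * p10 + pi * rho0 * p00) / (rho1 * (1 - pi) + rho0 * pi).

Definition gamma0 (p00 p10 rho0 rho1 pi : R) : R :=
  ((1 - pi) * (1 - rho1) * p10 + pi * (1 - rho0) * p00)
  / ((1 - rho1) * (1 - pi) + (1 - rho0) * pi).

Definition gamma2 (p00 p10 : R) (K : nat) (pi : R) : R :=
  (p00 - p10) ^ K * pi + p10 * geom (p00 - p10) K.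

(* Division by zero in gamma0/gamma1 only occurs
   when the corresponding coefficient (rho pi or 1 - rho pi) is 0, so the
   term vanishes, matching the convention "a term with zero coefficient
   is taken to be 0". *)
Definition is_value_solution (p00 p10 rho0 rho1 R0 R1 beta : R) (K : nat)
    (VS VNS V : R -> R -> R) : Prop :=
  (forall eta, exists M, forall pi, 0 <= pi <= 1 ->
      Rabs (VS pi eta) <= M /\ Rabs (VNS pi eta) <= M /\ Rabs (V pi eta) <= M) /\
  (forall eta pi, 0 <= pi <= 1 ->
      VS pi eta = RS R0 R1 pi
        + beta * (rho rho0 rho1 pi * V (gamma1 p00 p10 rho0 rho1 pi) eta
                  + (1 - rho rho0 rho1 pi) * V (gamma0 p00 p10 rho0 rho1 pi) eta)) /\
  (forall eta pi, 0 <= pi <= 1 ->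
      VNS pi eta = eta + beta * V (gamma2 p00 p10 K pi) eta) /\
  (forall eta pi, 0 <= pi <= 1 ->
      V pi eta = Rmax (VS pi eta) (VNS pi eta)).

Definition passive_set (VS VNS : R -> R -> R) (eta : R) (pi : R) : Prop :=
  0 <= pi <= 1 /\ VS pi eta <= VNS pi eta.

From Stdlib Require Import Reals Psatz.
Open Scope R_scope.

(* The subsidy eta enters the Bellman system only additively, through V_NS.
   Hence the increment D(pi) = V(pi, e2) - V(pi, e1), e1 <= e2, satisfies:
   if L <= D <= U on [0,1] with L <= 0 <= U, then beta L <= D <= (e2 - e1) + beta U.
   Since V is bounded, this contraction forces 0 <= D <= (e2 - e1) / (1 - beta),
   so V_NS - V_S grows in eta at rate at least
   1 - beta / (1 - beta) = (1 - 2 beta) / (1 - beta) > 0, and being bounded at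
   eta = 0 it is negative for eta very negative and nonnegative for eta very
   positive. *)

Lemma Rabs_le_inv x M : Rabs x <= M -> - M <= x <= M.
Proof. split_Rabs; lra. Qed.

Lemma Rabs_sub_le a b M : Rabs a <= M -> Rabs b <= M -> Rabs (a - b) <= 2 * M.
Proof.
  intros Ha Hb.
  apply Rabs_le_inv in Ha; apply Rabs_le_inv in Hb.
  apply Rabs_le; lra.
Qed.

Lemma Rdiv_in_01 a b : 0 <= a <= b -> 0 < b -> 0 <= a / b <= 1.
Proof.
  intros Hab Hb; unfold Rdiv.
  assert (0 < / b) by (apply Rinv_0_lt_compat; lra).
  assert (b * / b = 1) by (apply Rinv_r; lra).
  split; nra.
Qed.

Lemma Rmax_sub_bounds L U a1 b1 a2 b2 :
  L <= a2 - a1 <= U -> L <= b2 - b1 <= U -> L <= Rmax a2 b2 - Rmax a1 b1 <= U.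
Proof. unfold Rmax; destruct (Rle_dec a2 b2), (Rle_dec a1 b1); lra. Qed.

(* The hypotheses on [x] and [y] are only required when their weight is
   nonzero, matching the convention that a term with zero coefficient is 0. *)
Lemma convex_comb_bounds r L U x y : 0 <= r <= 1 ->
  (0 < r -> L <= x <= U) -> (0 < 1 - r -> L <= y <= U) ->
  L <= r * x + (1 - r) * y <= U.
Proof.
  intros Hr Hx Hy.
  destruct (Req_dec r 0) as [->|Hr0]; [specialize (Hy ltac:(lra)); lra|].
  destruct (Req_dec r 1) as [->|Hr1]; [specialize (Hx ltac:(lra)); lra|].
  specialize (Hx ltac:(lra)); specialize (Hy ltac:(lra)); nra.
Qed.

Lemma le_of_le_add_pow x c beta B : 0 <= beta < 1 -> 0 <= B ->
  (forall n, x <= c + beta ^ n * B) -> x <= c.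
Proof.
  intros Hbeta HB Hle.
  destruct (Rle_or_lt x c) as [|Hlt]; [assumption|exfalso].
  assert (Heps : 0 < (x - c) / (B + 1)) by (apply Rdiv_lt_0_compat; lra).
  destruct (pow_lt_1_zero beta ltac:(split_Rabs; lra) _ Heps) as [N HN].
  specialize (HN N (le_n N)); specialize (Hle N).
  rewrite Rabs_pos_eq in HN by (apply pow_le; lra).
  apply Rmult_lt_compat_r with (r := B + 1) in HN; [|lra].
  unfold Rdiv in HN; rewrite Rmult_assoc, Rinv_l, Rmult_1_r in HN by lra.
  assert (0 <= beta ^ N) by (apply pow_le; lra).
  nra.
Qed.

(* Iterating the hypothesis from [|D| <= B] gives
   [- beta^n B <= D <= delta / (1 - beta) + beta^n B]. *)
Lemma contraction_bounds (S : R -> Prop) (D : R -> R) beta delta B :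
  0 <= beta < 1 -> 0 <= delta ->
  (forall x, S x -> Rabs (D x) <= B) ->
  (forall L U, L <= 0 <= U -> (forall x, S x -> L <= D x <= U) ->
     forall x, S x -> beta * L <= D x <= delta + beta * U) ->
  forall x, S x -> 0 <= D x <= delta / (1 - beta).
Proof.
  intros Hbeta Hdelta Hbound Hstep x Sx.
  set (c := delta / (1 - beta)).
  assert (Hc : 0 <= c)
    by (apply Rmult_le_pos; [|left; apply Rinv_0_lt_compat]; lra).
  assert (Hfix : delta + beta * c = c) by (unfold c; field; lra).
  assert (HB : 0 <= B) by (pose proof (Rabs_pos (D x)); pose proof (Hbound x Sx); lra).
  assert (Hiter : forall n y, S y -> - (beta ^ n * B) <= D y <= c + beta ^ n * B).
  { induction n as [|n IH]; intros y Sy.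
    - pose proof (Rabs_le_inv _ _ (Hbound y Sy)); simpl; lra.
    - assert (0 <= beta ^ n * B) by (apply Rmult_le_pos; [apply pow_le|]; lra).
      destruct (Hstep (- (beta ^ n * B)) (c + beta ^ n * B) ltac:(lra) IH y Sy).
      simpl; split; nra. }
  split.
  - cut (- D x <= 0); [lra|].
    apply (le_of_le_add_pow _ _ beta B); [lra | lra |].
    intro n; destruct (Hiter n x Sx); lra.
  - apply (le_of_le_add_pow _ _ beta B); [lra | lra |].
    intro n; apply Hiter, Sx.
Qed.

Lemma rho_in_01 rho0 rho1 pi : 0 <= rho0 <= 1 -> 0 <= rho1 <= 1 -> 0 <= pi <= 1 ->
  0 <= rho rho0 rho1 pi <= 1.
Proof. unfold rho; nra. Qed.

Lemma gamma1_in_01 p00 p10 rho0 rho1 pi :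
  0 <= p00 <= 1 -> 0 <= p10 <= 1 -> 0 <= rho0 <= 1 -> 0 <= rho1 <= 1 -> 0 <= pi <= 1 ->
  0 < rho rho0 rho1 pi -> 0 <= gamma1 p00 p10 rho0 rho1 pi <= 1.
Proof.
  unfold rho, gamma1; intros Hp00 Hp10 Hrho0 Hrho1 Hpi Hpos.
  assert (0 <= pi * rho0 /\ 0 <= (1 - pi) * rho1) by (split; nra).
  assert (0 <= pi * (1 - rho0) /\ 0 <= (1 - pi) * (1 - rho1)) by (split; nra).
  apply Rdiv_in_01; [split|]; nra.
Qed.

Lemma gamma0_in_01 p00 p10 rho0 rho1 pi :
  0 <= p00 <= 1 -> 0 <= p10 <= 1 -> 0 <= rho0 <= 1 -> 0 <= rho1 <= 1 -> 0 <= pi <= 1 ->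
  0 < 1 - rho rho0 rho1 pi -> 0 <= gamma0 p00 p10 rho0 rho1 pi <= 1.
Proof.
  unfold rho, gamma0; intros Hp00 Hp10 Hrho0 Hrho1 Hpi Hpos.
  assert (0 <= pi * rho0 /\ 0 <= (1 - pi) * rho1) by (split; nra).
  assert (0 <= pi * (1 - rho0) /\ 0 <= (1 - pi) * (1 - rho1)) by (split; nra).
  apply Rdiv_in_01; [split|]; nra.
Qed.

Lemma gamma2_S p00 p10 K pi :
  gamma2 p00 p10 (S K) pi = gamma2 p00 p10 K (pi * p00 + (1 - pi) * p10).
Proof. unfold gamma2; simpl; ring. Qed.

Lemma gamma2_in_01 p00 p10 K pi : 0 <= p00 <= 1 -> 0 <= p10 <= 1 -> 0 <= pi <= 1 ->
  0 <= gamma2 p00 p10 K pi <= 1.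
Proof.
  intros Hp00 Hp10; revert pi; induction K as [|K IH]; intros pi Hpi.
  - unfold gamma2; simpl; lra.
  - rewrite gamma2_S; apply IH; nra.
Qed.

Section ValueIncrements.

Variables (p00 p10 rho0 rho1 R0 R1 beta : R) (K : nat) (VS VNS V : R -> R -> R).
Hypotheses (Hp00 : 0 <= p00 <= 1) (Hp10 : 0 <= p10 <= 1)
  (Hrho0 : 0 <= rho0 <= 1) (Hrho1 : 0 <= rho1 <= 1) (Hbeta : 0 < beta < 1)
  (Hsol : is_value_solution p00 p10 rho0 rho1 R0 R1 beta K VS VNS V).

Lemma VS_increment_bounds e1 e2 L U :
  (forall y, 0 <= y <= 1 -> L <= V y e2 - V y e1 <= U) ->
  forall pi, 0 <= pi <= 1 -> beta * L <= VS pi e2 - VS pi e1 <= beta * U.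
Proof.
  destruct Hsol as (_ & HS & _ & _); intros HD pi Hpi.
  rewrite (HS e2 pi Hpi), (HS e1 pi Hpi).
  set (r := rho rho0 rho1 pi).
  assert (Hr : 0 <= r <= 1) by (apply rho_in_01; assumption).
  pose proof (convex_comb_bounds r L U
    (V (gamma1 p00 p10 rho0 rho1 pi) e2 - V (gamma1 p00 p10 rho0 rho1 pi) e1)
    (V (gamma0 p00 p10 rho0 rho1 pi) e2 - V (gamma0 p00 p10 rho0 rho1 pi) e1) Hr
    (fun Hr1 => HD _ (gamma1_in_01 _ _ _ _ _ Hp00 Hp10 Hrho0 Hrho1 Hpi Hr1))
    (fun Hr0 => HD _ (gamma0_in_01 _ _ _ _ _ Hp00 Hp10 Hrho0 Hrho1 Hpi Hr0))).
  split; nra.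
Qed.

Lemma VNS_increment_bounds e1 e2 L U :
  (forall y, 0 <= y <= 1 -> L <= V y e2 - V y e1 <= U) ->
  forall pi, 0 <= pi <= 1 ->
  (e2 - e1) + beta * L <= VNS pi e2 - VNS pi e1 <= (e2 - e1) + beta * U.
Proof.
  destruct Hsol as (_ & _ & HNS & _); intros HD pi Hpi.
  rewrite (HNS e2 pi Hpi), (HNS e1 pi Hpi).
  pose proof (HD _ (gamma2_in_01 p00 p10 K pi Hp00 Hp10 Hpi)).
  split; nra.
Qed.

Lemma V_increment_bounds e1 e2 : e1 <= e2 ->
  forall pi, 0 <= pi <= 1 -> 0 <= V pi e2 - V pi e1 <= (e2 - e1) / (1 - beta).
Proof.
  intros He.
  destruct Hsol as (Hbound & _ & _ & HV).
  destruct (Hbound e1) as [M1 HM1], (Hbound e2) as [M2 HM2].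
  apply (contraction_bounds (fun y => 0 <= y <= 1) _ beta (e2 - e1) (2 * M2 + 2 * M1));
    [lra | lra | |].
  - intros y Hy.
    destruct (HM1 y Hy) as (_ & _ & A1), (HM2 y Hy) as (_ & _ & A2).
    apply Rabs_le_inv in A1; apply Rabs_le_inv in A2; apply Rabs_le; lra.
  - intros L U HLU HD pi Hpi.
    rewrite (HV e2 pi Hpi), (HV e1 pi Hpi).
    pose proof (VS_increment_bounds e1 e2 L U HD pi Hpi).
    pose proof (VNS_increment_bounds e1 e2 L U HD pi Hpi).
    apply Rmax_sub_bounds; nra.
Qed.

Lemma gap_increment pi : 0 <= pi <= 1 -> forall e1 e2, e1 <= e2 ->
  (1 - 2 * beta) / (1 - beta) * (e2 - e1)
  <= (VNS pi e2 - VS pi e2) - (VNS pi e1 - VS pi e1).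
Proof.
  intros Hpi e1 e2 He.
  pose proof (V_increment_bounds e1 e2 He) as HD.
  pose proof (VS_increment_bounds _ _ _ _ HD pi Hpi).
  pose proof (VNS_increment_bounds _ _ _ _ HD pi Hpi).
  assert (Hk : (1 - 2 * beta) / (1 - beta) * (e2 - e1)
               = (e2 - e1) - beta * ((e2 - e1) / (1 - beta))) by (field; lra).
  lra.
Qed.

Lemma gap_bounded eta : exists M, forall pi, 0 <= pi <= 1 ->
  Rabs (VNS pi eta - VS pi eta) <= M.
Proof.
  destruct Hsol as (Hbound & _).
  destruct (Hbound eta) as [M HM].
  exists (2 * M); intros pi Hpi.
  destruct (HM pi Hpi) as (HS & HNS & _).
  apply Rabs_sub_le; assumption.
Qed.

End ValueIncrements.

Lemma linear_growth_neg (g : R -> R) k M : 0 < k ->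
  (forall e1 e2, e1 <= e2 -> k * (e2 - e1) <= g e2 - g e1) -> Rabs (g 0) <= M ->
  forall e, e <= - (M + 1) / k -> g e < 0.
Proof.
  intros Hk Hg HM e He.
  apply Rabs_le_inv in HM.
  apply Rmult_le_compat_r with (r := k) in He; [|lra].
  unfold Rdiv in He; rewrite Rmult_assoc, Rinv_l, Rmult_1_r in He by lra.
  assert (e <= 0) by nra.
  pose proof (Hg e 0 ltac:(lra)).
  lra.
Qed.

Lemma linear_growth_nonneg (g : R -> R) k M : 0 < k ->
  (forall e1 e2, e1 <= e2 -> k * (e2 - e1) <= g e2 - g e1) -> Rabs (g 0) <= M ->
  forall e, M / k <= e -> 0 <= g e.
Proof.
  intros Hk Hg HM e He.
  pose proof (Rabs_pos (g 0)); apply Rabs_le_inv in HM.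
  apply Rmult_le_compat_r with (r := k) in He; [|lra].
  unfold Rdiv in He; rewrite Rmult_assoc, Rinv_l, Rmult_1_r in He by lra.
  assert (0 <= e) by nra.
  pose proof (Hg 0 e ltac:(lra)).
  lra.
Qed.

Theorem theorem2 (p00 p10 rho0 rho1 R0 R1 beta : R) (K : nat)
    (VS VNS V : R -> R -> R) :
  0 <= p00 <= 1 -> 0 <= p10 <= 1 ->
  0 <= rho0 <= 1 -> 0 <= rho1 <= 1 ->
  (1 <= K)%nat ->
  0 < beta < 1 / 3 ->
  rho0 < rho1 -> R0 < R1 ->
  is_value_solution p00 p10 rho0 rho1 R0 R1 beta K VS VNS V ->
  (* monotone: P(eta1) \ P(eta2) = empty for eta1 <= eta2 *)
  (forall eta1 eta2, eta1 <= eta2 ->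
     forall pi, passive_set VS VNS eta1 pi -> passive_set VS VNS eta2 pi) /\
  (* from the empty set (eta -> -oo) ... *)
  (exists eta0, forall eta, eta <= eta0 -> forall pi, ~ passive_set VS VNS eta pi) /\
  (* ... to [0,1] (eta -> +oo) *)
  (exists eta0, forall eta, eta0 <= eta ->
     forall pi, 0 <= pi <= 1 -> passive_set VS VNS eta pi).
Proof.
  intros Hp00 Hp10 Hrho0 Hrho1 _ Hbeta _ _ Hsol.
  assert (Hbeta1 : 0 < beta < 1) by lra.
  set (k := (1 - 2 * beta) / (1 - beta)).
  assert (Hk : 0 < k) by (apply Rdiv_lt_0_compat; lra).
  assert (Hgrowth : forall pi, 0 <= pi <= 1 -> forall e1 e2, e1 <= e2 ->
            k * (e2 - e1) <= (VNS pi e2 - VS pi e2) - (VNS pi e1 - VS pi e1))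
    by exact (gap_increment _ _ _ _ _ _ _ _ _ _ _ Hp00 Hp10 Hrho0 Hrho1 Hbeta1 Hsol).
  destruct (gap_bounded _ _ _ _ _ _ _ _ _ _ _ Hsol 0) as [M HM].
  split; [|split].
  - intros e1 e2 He pi [Hpi Hle]; split; [exact Hpi|].
    pose proof (Hgrowth pi Hpi e1 e2 He); nra.
  - exists (- (M + 1) / k); intros eta Heta pi [Hpi Hle].
    pose proof (linear_growth_neg (fun e => VNS pi e - VS pi e) k M Hk
                  (Hgrowth pi Hpi) (HM pi Hpi) eta Heta); lra.
  - exists (M / k); intros eta Heta pi Hpi; split; [exact Hpi|].
    pose proof (linear_growth_nonneg (fun e => VNS pi e - VS pi e) k M Hk
                  (Hgrowth pi Hpi) (HM pi Hpi) eta Heta); lra.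
Qed.
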